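(* Let $\mathsf{X}\subset\mathbb{R}^d$ be compact, contained in the ball of radius $R$ centered at the origin, and $\alpha,\beta\in\mathcal{M}_+(\mathsf{X})$. Let $p\in[1,+\infty)$, $\mathrm{C}_1(x,y)=|x-y|^p$ on $\mathbb{R}$ and $\mathrm{C}_d(x,y)=\|x-y\|^p$ on $\mathbb{R}^d$. Then $\mathrm{USOT}(\alpha,\beta)\le\mathrm{UOT}(\alpha,\beta)$.
   Context: Fix entropy functions $\varphi_1,\varphi_2$ (convex, l.s.c., domain in $[0,\infty)$, $\varphi(1)=0$); $\mathrm{D}_\varphi(\mu|\nu)=\int\varphi(\frac{d\mu}{d\nu})d\nu+\varphi'_\infty\mu^\perp(\mathbb{R}^s)$. On $\mathbb{R}^d$, $\mathrm{UOT}(\alpha,\beta)=\inf_{\pi\in\mathcal{M}_+(\mathbb{R}^d\times\mathbb{R}^d)}\int\mathrm{C}_dd\pi+\mathrm{D}_{\varphi_1}(\pi_1|\alpha)+\mathrm{D}_{\varphi_2}(\pi_2|\beta)$ ($\pi_1,\pi_2$ marginals). $\mathrm{OT}$ denotes balanced OT with cost $\mathrm{C}_1$ on $\mathbb{R}$. With $\boldsymbol\sigma$ uniform on $\mathbb{S}^{d-1}$, $\theta^\star(x)=\langle\theta,x\rangle$: $\mathrm{SOT}(\pi_1,\pi_2)=\int\mathrm{OT}(\theta^\star_\sharp\pi_1,\theta^\star_\sharp\pi_2)d\boldsymbol\sigma$ and $\mathrm{USOT}(\alpha,\beta)=\inf_{\pi_1,\pi_2\in\mathcal{M}_+(\mathbb{R}^d)}\mathrm{SOT}(\pi_1,\pi_2)+\mathrm{D}_{\varphi_1}(\pi_1|\alpha)+\mathrm{D}_{\varphi_2}(\pi_2|\beta)$.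 *)

From HB Require Import structures.
From mathcomp Require Import all_boot all_order all_algebra.
From mathcomp Require Import all_classical all_reals all_analysis.
Set Implicit Arguments. Unset Strict Implicit. Unset Printing Implicit Defensive.
Import Order.TTheory GRing.Theory Num.Theory.
Import numFieldNormedType.Exports.
Local Open Scope classical_set_scope.
Local Open Scope ring_scope.

(* R^d, represented by row vectors 'rV[R]_d, with its Borel sigma-algebra
   (the sigma-algebra generated by the open sets; the topology of 'rV[R]_d
   is the usual one on R^d). *)
Definition Rd (R : realType) (d : nat) :=
  g_sigma_algebraType (@open 'rV[R]_d).

Definition dotp (R : realType) (d : nat) (x y : 'rV[R]_d) : R :=
  \sum_(i < d) x ord0 i * y ord0 i.
Definition enorm (R : realType) (d : nat) (x : 'rV[R]_d) : R :=
  Num.sqrt (dotp x x).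

Definition sphere (R : realType) (d : nat) : set 'rV[R]_d :=
  [set x | enorm x = 1].

Definition orthogonal_mx (R : realType) (d : nat) (Q : 'M[R]_d) : Prop :=
  Q *m Q^T = 1%:M.

(* Uniform probability measure on S^{d-1}: a Borel probability measure on R^d
   concentrated on the sphere and invariant under all orthogonal maps
   (this characterises the normalised surface measure uniquely). *)
Definition uniform_on_sphere (R : realType) (d : nat)
    (sigma : probability (Rd R d) R) : Prop :=
  sigma (~` (@sphere R d : set (Rd R d))) = 0%E /\
  forall (Q : 'M[R]_d), orthogonal_mx Q ->
    forall A : set (Rd R d), measurable A ->
      sigma ((fun x : Rd R d => (x *m Q : Rd R d)) @^-1` A) = sigma A.

(* Entropy functions: convex, lower semicontinuous, proper (never -oo),
   domain contained in [0, +oo), phi 1 = 0.  Values outside the domain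
   are +oo. *)
Definition entropy_function (R : realType) (phi : R -> \bar R) : Prop :=
  (forall (x y t : R), 0 <= t <= 1 ->
     (phi (t * x + (1 - t) * y)%R <= t%:E * phi x + (1 - t)%R%:E * phi y)%E) /\
  lower_semicontinuous phi /\
  (forall x, phi x != -oo%E) /\
  (forall x, x < 0 -> phi x = +oo%E) /\
  phi 1 = 0%E.

Definition recession (R : realType) (phi : R -> \bar R) : \bar R :=
  lim ((fun s : R => (phi s * (s^-1)%:E)%E) @ +oo).

(* Csiszar phi-divergence D_phi(mu | nu) = \int phi(d mu_ac / d nu) d nu
   + phi'_oo * mu^perp(whole space), where mu = (f nu) + mu^perp is the
   Lebesgue decomposition of mu w.r.t. nu: mu^perp is mu restricted to a
   nu-null measurable set N, and f >= 0 is a density of the remaining part.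
   For finite measures this decomposition is unique (f nu-a.e., mu^perp),
   so the value below (an infimum over all such decompositions, which all
   give the same value) is exactly D_phi(mu | nu).  mu is taken as a set
   function so that it can be a marginal / pushforward. *)
Definition divergence (dT : measure_display) (T : measurableType dT)
    (R : realType) (phi : R -> \bar R)
    (mu : set T -> \bar R) (nu : {measure set T -> \bar R}) : \bar R :=
  ereal_inf [set v | exists (f : T -> R) (N : set T),
    [/\ measurable_fun setT f /\ (forall x, 0 <= f x), measurable N,
        nu N = 0%E,
        (forall A, measurable A ->
            mu A = (\int[nu]_(x in A `\` N) (f x)%:E + mu (A `&` N))%E) &
        v = (\int[nu]_x phi (f x) + recession phi * mu N)%E]].

(* Balanced OT on R with cost |x - y|^p between two (set functions of)
   finite measures: infimum over couplings; +oo if there is none. *)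
Definition OT1 (R : realType) (p : R) (m1 m2 : set R -> \bar R) : \bar R :=
  ereal_inf [set v | exists gamma : {finite_measure set (R * R)%type -> \bar R},
    (forall A : set R, measurable A ->
        gamma (A `*` setT) = m1 A /\ gamma (setT `*` A) = m2 A) /\
    v = (\int[gamma]_z ((`|z.1 - z.2|) `^ p)%:E)%E].

Definition proj_push (R : realType) (d : nat) (theta : 'rV[R]_d)
    (mu : set (Rd R d) -> \bar R) : set R -> \bar R :=
  fun A => mu ((fun x : Rd R d => dotp theta x) @^-1` A).

Definition SOT (R : realType) (d : nat) (p : R)
    (sigma : {measure set (Rd R d) -> \bar R})
    (pi1 pi2 : set (Rd R d) -> \bar R) : \bar R :=
  (\int[sigma]_theta OT1 p (proj_push theta pi1) (proj_push theta pi2))%E.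

Definition USOT (R : realType) (d : nat) (p : R)
    (sigma : {measure set (Rd R d) -> \bar R})
    (phi1 phi2 : R -> \bar R) (alpha beta : {measure set (Rd R d) -> \bar R})
    : \bar R :=
  ereal_inf [set v | exists pi1 pi2 : {finite_measure set (Rd R d) -> \bar R},
    v = (SOT p sigma pi1 pi2 + divergence phi1 pi1 alpha
         + divergence phi2 pi2 beta)%E].

Definition UOT (R : realType) (d : nat) (p : R)
    (phi1 phi2 : R -> \bar R) (alpha beta : {measure set (Rd R d) -> \bar R})
    : \bar R :=
  ereal_inf [set v | exists pi : {finite_measure set (Rd R d * Rd R d)%type -> \bar R},
    v = (\int[pi]_z ((enorm (z.1 - z.2)) `^ p)%:E
         + divergence phi1 (fun A => pi (A `*` setT)) alpha
         + divergence phi2 (fun A => pi (setT `*` A)) beta)%E].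

(* For a plan pi of UOT, take its two marginals as the pair (pi1, pi2) in USOT:
   the divergence terms are then identical.  For a unit vector theta, the image
   of pi under (x, y) |-> (<theta, x>, <theta, y>) couples theta#pi1 and
   theta#pi2, and |<theta, x - y>|^p <= ||x - y||^p by Cauchy-Schwarz; hence
   OT(theta#pi1, theta#pi2) <= \int ||x - y||^p dpi for sigma-almost every
   theta, and integrating against the probability sigma bounds SOT(pi1, pi2). *)

From HB Require Import structures.
From mathcomp Require Import all_boot all_order all_algebra.
From mathcomp Require Import all_classical all_reals all_analysis.
From mathcomp Require Import measurable_realfun lra.
Import Order.TTheory GRing.Theory Num.Theory.
Import numFieldNormedType.Exports.
Local Open Scope classical_set_scope.
Local Open Scope ring_scope.

Section euclidean.
Context {R : realType} {d : nat}.
Implicit Types x y t : 'rV[R]_d.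

Lemma dotpC x y : dotp x y = dotp y x.
Proof. by apply: eq_bigr => i _; rewrite mulrC. Qed.

Lemma dotpBr t x y : dotp t (x - y) = dotp t x - dotp t y.
Proof. by rewrite /dotp -sumrB; apply: eq_bigr => i _; rewrite !mxE mulrBr. Qed.

Lemma dotpp_ge0 x : 0 <= dotp x x.
Proof. by apply: sumr_ge0 => i _; rewrite -expr2 sqr_ge0. Qed.

Lemma sqr_enorm x : enorm x ^+ 2 = dotp x x.
Proof. exact/sqr_sqrtr/dotpp_ge0. Qed.

Lemma dotpp_eq0 x y : dotp x x = 0 -> dotp x y = 0.
Proof.
have sq_ge0 i : 0 <= x ord0 i * x ord0 i by rewrite -expr2 sqr_ge0.
move=> /psumr_eq0P x0; rewrite /dotp big1 // => i _.
have /eqP := x0 (fun i _ => sq_ge0 i) i isT.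
by rewrite mulf_eq0 orbb => /eqP ->; rewrite mul0r.
Qed.

Lemma ler_norm_dotp x y : `|dotp x y| <= enorm x * enorm y.
Proof.
have [n0|n_neq0] := eqVneq (enorm x * enorm y) 0.
  move: n0 => /eqP; rewrite mulf_eq0 => /orP[] /eqP n0.
    by rewrite dotpp_eq0 ?normr0 ?mulr_ge0 ?sqrtr_ge0 // -sqr_enorm n0 expr0n.
  by rewrite dotpC dotpp_eq0 ?normr0 ?mulr_ge0 ?sqrtr_ge0 //
    -sqr_enorm n0 expr0n.
have n_gt0 : 0 < enorm x * enorm y by rewrite lt_def n_neq0 mulr_ge0 ?sqrtr_ge0.
(* Sum the inequalities (|y| x_i - s |x| y_i)^2 >= 0, for s = 1 and s = -1. *)
have key s : s ^+ 2 = 1 -> s * dotp x y <= enorm x * enorm y.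
  move=> s2; rewrite -(ler_pM2l n_gt0).
  suff : 2 * (enorm x * enorm y) * (s * dotp x y) <=
         enorm y ^+ 2 * dotp x x + enorm x ^+ 2 * dotp y y.
    by rewrite -!sqr_enorm; nra.
  rewrite /dotp !mulr_sumr -big_split /=; apply: ler_sum => i _.
  have := sqr_ge0 (enorm y * x ord0 i - s * (enorm x * y ord0 i)).
  have : s ^+ 2 * (enorm x * y ord0 i) ^+ 2 = (enorm x * y ord0 i) ^+ 2.
    by rewrite s2 mul1r.
  nra.
rewrite ler_norml -[dotp x y]mul1r key ?expr1n // andbT lerNl -mulNr.
by rewrite key // sqrrN expr1n.
Qed.

End euclidean.

Section borel_Rd.
Context {R : realType} {d : nat}.

Lemma continuous_measurable_fun_Rd (f : 'rV[R]_d -> R) :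
  continuous f -> measurable_fun setT (f : Rd R d -> R).
Proof.
move=> cf; apply: (measurability _ (RGenOpens.measurableE R)).
move=> _ [_ [a [b ->]] <-]; rewrite setTI; apply: sub_sigma_algebra.
by apply: open_comp; [move=> x _; exact: cf | exact: interval_open].
Qed.

Lemma measurable_dotp (t : 'rV[R]_d) :
  measurable_fun setT (fun x : Rd R d => dotp t x).
Proof.
apply: measurable_sum => i; apply: measurable_funM => //.
by apply: continuous_measurable_fun_Rd; exact: coord_continuous.
Qed.

Lemma measurable_enorm : measurable_fun setT (fun x : Rd R d => enorm x).
Proof.
have mdotpp : measurable_fun setT (fun x : Rd R d => dotp x x).
  apply: measurable_sum => i.
  by apply: measurable_funM; apply: continuous_measurable_fun_Rd;
    exact: coord_continuous.
exact: measurableT_comp (continuous_measurable_fun (@sqrt_continuous R)) mdotpp.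
Qed.

Lemma measurable_sphere : measurable (@sphere R d : set (Rd R d)).
Proof.
by have := measurable_enorm measurableT _ (measurable_set1 1); rewrite setTI.
Qed.

End borel_Rd.

(* Indexing by [{mfun _ >-> _}] makes the measure structure canonical, as for
   [distribution]; the library's [pushforward] instance needs a proof of
   measurability that unification cannot find. *)
Section finite_pushforward.
Local Open Scope ereal_scope.
Context d1 d2 (T1 : measurableType d1) (T2 : measurableType d2) (R : realType).
Variables (mu : {finite_measure set T1 -> \bar R}) (f : {mfun T1 >-> T2}).

Definition fin_pushforward := pushforward mu f.

Let fin_pushforward0 : fin_pushforward set0 = 0.
Proof. exact: measure0. Qed.

Let fin_pushforward_ge0 A : 0 <= fin_pushforward A.
Proof. exact: measure_ge0. Qed.

Let fin_pushforward_sigma_additive : semi_sigma_additive fin_pushforward.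
Proof. exact: measure_semi_sigma_additive. Qed.

HB.instance Definition _ := isMeasure.Build _ _ _ fin_pushforward
  fin_pushforward0 fin_pushforward_ge0 fin_pushforward_sigma_additive.

Let fin_pushforward_fin : fin_num_fun fin_pushforward.
Proof. by move=> A mA; apply: fin_num_measure; exact: measurable_funPTI. Qed.

HB.instance Definition _ := Measure_isFinite.Build _ _ _ fin_pushforward
  fin_pushforward_fin.

End finite_pushforward.
Arguments fin_pushforward {d1 d2 T1 T2 R}.

Section marginals.
Context d1 d2 (T1 : measurableType d1) (T2 : measurableType d2) (R : realType).

HB.instance Definition _ :=
  isMeasurableFun.Build _ _ _ _ (@fst T1 T2) measurable_fst.
HB.instance Definition _ :=
  isMeasurableFun.Build _ _ _ _ (@snd T1 T2) measurable_snd.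

Variable mu : {finite_measure set (T1 * T2)%type -> \bar R}.

Lemma fin_pushforward_fst : fin_pushforward mu fst = (fun A => mu (A `*` setT)).
Proof.
by apply/funext => A; congr (mu _); apply/seteqP; split=> z //= [].
Qed.

Lemma fin_pushforward_snd : fin_pushforward mu snd = (fun A => mu (setT `*` A)).
Proof.
by apply/funext => A; congr (mu _); apply/seteqP; split=> z //= [].
Qed.

End marginals.

(* No measurability of [f] is assumed: the integral of a nonnegative function
   is the supremum of the integrals of its simple minorants.  This is needed
   because theta |-> OT(theta#pi1, theta#pi2) is not known to be measurable. *)
Section ge0_integral_bounds.
Import HBNNSimple.
Local Open Scope ereal_scope.
Context d (T : measurableType d) (R : realType) (mu : {measure set T -> \bar R}).
Variable f : T -> \bar R.
Hypothesis f_ge0 : forall x, 0 <= f x.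

Lemma ge0_le_integralT (g : T -> \bar R) : (forall x, f x <= g x) ->
  \int[mu]_x f x <= \int[mu]_x g x.
Proof.
move=> fg; rewrite !ge0_integralTE//; last by move=> x; exact: le_trans (fg x).
apply: le_ereal_sup => _ [h hf <-]; exists h => // x; exact: le_trans (fg x).
Qed.

Lemma ge0_ae_le_integralT_cst (M : \bar R) : 0 <= M ->
  {ae mu, forall x, f x <= M} -> \int[mu]_x f x <= M * mu setT.
Proof.
move=> M_ge0 fM; rewrite ge0_integralTE// -integral_cst//.
apply: ge_ereal_sup => _ [h hf <-].
have := integral_nnsfun mu measurableT h; rewrite patch_setT => <-.
apply: ae_ge0_le_integral => //.
- by move=> x _; rewrite lee_fin; exact: fun_ge0.
- exact/measurable_EFinP/measurable_funPT.
- by move: fM; apply: filterS => x fxM _; exact: le_trans (hf x) fxM.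
Qed.

End ge0_integral_bounds.

Lemma OT1_ge0 (R : realType) (p : R) (m1 m2 : set R -> \bar R) :
  (0 <= OT1 p m1 m2)%E.
Proof.
apply: le_ereal_inf_tmp => _ [gamma [_ ->]].
by apply: integral_ge0 => z _; rewrite lee_fin powR_ge0.
Qed.

Section sliced_cost_bound.
Local Open Scope ereal_scope.
Context {R : realType} {d : nat} (p : R).
Hypothesis p_ge0 : (0 <= p)%R.
Variable pi : {finite_measure set (Rd R d * Rd R d)%type -> \bar R}.

Definition proj_pair (t : 'rV[R]_d) (z : Rd R d * Rd R d) : R * R :=
  (dotp t z.1, dotp t z.2).

Lemma measurable_proj_pair t : measurable_fun setT (proj_pair t).
Proof.
apply: measurable_fun_pair.
  exact: measurableT_comp (measurable_dotp t) measurable_fst.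
exact: measurableT_comp (measurable_dotp t) measurable_snd.
Qed.

HB.instance Definition _ t :=
  isMeasurableFun.Build _ _ _ _ (proj_pair t) (measurable_proj_pair t).

Let cost1 (z : R * R) := ((`|z.1 - z.2|) `^ p)%:E.
Let cost (z : Rd R d * Rd R d) := ((enorm (z.1 - z.2)) `^ p)%:E.

Lemma OT1_proj_le_cost (t : 'rV[R]_d) : enorm t = 1%R ->
  OT1 p (proj_push t (fun A => pi (A `*` setT)))
        (proj_push t (fun A => pi (setT `*` A))) <= \int[pi]_z cost z.
Proof.
move=> t1.
have mcost1 : measurable_fun setT cost1.
  apply/measurable_EFinP; apply: measurableT_comp (measurable_powR p) _.
  have msub : measurable_fun setT (fun z : R * R => (z.1 - z.2)%R).
    exact: measurable_funB measurable_fst measurable_snd.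
  have mnorm : measurable_fun setT (@Num.norm R R) by exact: normr_measurable.
  exact: measurableT_comp mnorm msub.
apply: le_trans (_ : \int[fin_pushforward pi (proj_pair t)]_z cost1 z <= _).
  apply: ereal_inf_lbound; exists (fin_pushforward pi (proj_pair t)).
  by split=> // A mA; split; congr (pi _); apply/seteqP; split=> z //= [].
rewrite [X in X <= _](ge0_integral_pushforward (measurable_proj_pair t))//;
  last by move=> z _; rewrite lee_fin powR_ge0.
rewrite preimage_setT; apply: ge0_le_integralT => [z|z].
  by rewrite lee_fin powR_ge0.
rewrite /cost1 /cost lee_fin /= -dotpBr ge0_ler_powR ?nnegrE ?sqrtr_ge0 //.
by rewrite -[enorm _]mul1r -t1 ler_norm_dotp.
Qed.

Lemma SOT_le_cost (sigma : probability (Rd R d) R) :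
  sigma (~` (@sphere R d : set (Rd R d))) = 0 ->
  SOT p sigma (fun A => pi (A `*` setT)) (fun A => pi (setT `*` A)) <=
  \int[pi]_z cost z.
Proof.
move=> sigma_sphere.
rewrite -[leRHS]mule1 -(probability_setT sigma).
apply: ge0_ae_le_integralT_cst => [t||]; first exact: OT1_ge0.
  by apply: integral_ge0 => z _; rewrite lee_fin powR_ge0.
exists (~` (@sphere R d : set (Rd R d))); split => //.
  exact: measurableC measurable_sphere.
by move=> t /= + St; apply; exact: OT1_proj_le_cost.
Qed.

End sliced_cost_bound.

Theorem theorem7 (R : realType) (d : nat) (hd : (0 < d)%N)
  (phi1 phi2 : R -> \bar R)
  (hphi1 : entropy_function phi1) (hphi2 : entropy_function phi2)
  (sigma : probability (Rd R d) R) (hsigma : uniform_on_sphere sigma)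
  (X : set 'rV[R]_d) (hXc : compact X)
  (r : R) (hXr : forall x, X x -> enorm x <= r)
  (alpha beta : {finite_measure set (Rd R d) -> \bar R})
  (halpha : alpha (~` (X : set (Rd R d))) = 0%E)
  (hbeta : beta (~` (X : set (Rd R d))) = 0%E)
  (p : R) (hp : 1 <= p) :
  (USOT p sigma phi1 phi2 alpha beta <= UOT p phi1 phi2 alpha beta)%E.
Proof.
apply: le_ereal_inf_tmp => _ [pi ->].
(* The marginals enter as plain set functions, not through the coercion of a
   finite measure, so that they can be rewritten. *)
pose pi1 := fin_pushforward pi fst; pose pi2 := fin_pushforward pi snd.
apply: (@le_trans _ _ (SOT p sigma pi1 pi2 + divergence phi1 pi1 alpha
                       + divergence phi2 pi2 beta)%E).
  by apply: ereal_inf_lbound; exists pi1, pi2.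
rewrite /pi1 /pi2 fin_pushforward_fst fin_pushforward_snd.
apply: leeD2r; apply: leeD2r.
exact: SOT_le_cost _ (le_trans ler01 hp) pi _ hsigma.1.
Qed.
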